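(* Fix any enumeration $(\mathtt C_n[-])_{n\in\mathbb N}$ of all contexts of the untyped $\lambda$-calculus, and define on the set $\Lambda$ of $\lambda$-terms $$p_{\mathrm{ctx}}(M,N)=\sum\Big\{\tfrac{1}{2^n}\ \Big|\ n\in\mathbb N,\ \mathtt C_n[M]\text{ is unsolvable or }\mathtt C_n[N]\text{ is unsolvable}\Big\}.$$ Then $p_{\mathrm{ctx}}$ is a sensible extensional $\lambda$-PPM.
   Context: A context $\mathtt C[-]$ is a $\lambda$-term with one hole; $\mathtt C[M]$ is the result of filling the hole with $M$. A $\lambda$-term is solvable if it has a head normal form (standard notion). A partial pseudo-metric (PPM) on a set $X$ is a map $p:X\times X\to[0,+\infty]$ satisfying, for all $x,y,z$: $p(x,x)\leq p(x,y)$; $p(x,y)=p(y,x)$; $p(x,y)\leq p(x,z)+p(z,y)-p(z,z)$. It induces the preorder $x\leq_p y$ iff $p(x,y)\leq p(x,x)$, and the equivalence $x\simeq_p y$ iff $x\leq_p y$ and $y\leq_p x$. Open balls are $B^p_\epsilon(x)=\{y\mid p(y,x)<p(x,x)+\epsilon\}$ ($\epsilon>0$), and the topology $\mathcal O_p(X)$ consists of all unions of open balls; a map $f:X\to X$ is $p$-continuous if it is continuous for $\mathcal O_p(X)$. A $\lambda$-theory is an equivalence relation $\simeq$ on $\Lambda$ such that $M\simeq N$ implies $MP\simeq NP$, $PM\simeq PN$ and $\lambda x.M\simeq\lambda x.N$, and $(\lambda x.M)N\simeq M[N/x]$ always holds; it is extensional if moreover $M\simeq\lambda x.Mx$ (for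 $x$ not free in $M$). A $\lambda$-PPM (resp. extensional $\lambda$-PPM) is a PPM $p$ on $\Lambda$ such that $\simeq_p$ is a $\lambda$-theory (resp. an extensional $\lambda$-theory) and, for every context $\mathtt C[-]$, the map $M\mapsto\mathtt C[M]$ is $p$-continuous. A $\lambda$-PPM $p$ is sensible if every unsolvable term $M$ is generic for $p$ (i.e. $M\leq_p N$ for all $N\in\Lambda$) while no solvable term is generic for $p$. *)

From HB Require Import structures.
From mathcomp Require Import all_boot all_order all_algebra.
From mathcomp Require Import all_classical all_reals.
From mathcomp Require Import esum.
From Stdlib Require Import Relations.

Set Implicit Arguments.
Unset Strict Implicit.
Unset Printing Implicit Defensive.

Import Order.TTheory GRing.Theory Num.Theory.
Local Open Scope classical_set_scope.
Local Open Scope ring_scope.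

Inductive term : Type :=
| Var : nat -> term
| App : term -> term -> term
| Lam : term -> term.

Fixpoint lift (c : nat) (t : term) : term :=
  match t with
  | Var n => if (n < c)%N then Var n else Var n.+1
  | App M N => App (lift c M) (lift c N)
  | Lam M => Lam (lift c.+1 M)
  end.

(* subst t k s : t[s/k], indices above k decremented *)
Fixpoint subst (t : term) (k : nat) (s : term) : term :=
  match t with
  | Var n => if (n < k)%N then Var n else if n == k then s else Var n.-1
  | App M N => App (subst M k s) (subst N k s)
  | Lam M => Lam (subst M k.+1 (lift 0 s))
  end.

Inductive beta : term -> term -> Prop :=
| beta_redex M N : beta (App (Lam M) N) (subst M 0 N)
| beta_appl M M' N : beta M M' -> beta (App M N) (App M' N)
| beta_appr M N N' : beta N N' -> beta (App M N) (App M N')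
| beta_lam M M' : beta M M' -> beta (Lam M) (Lam M').

Definition beta_red : term -> term -> Prop := clos_refl_trans term beta.

(* head normal forms: \x1..xn. y M1 .. Mk *)
Fixpoint head_var_app (t : term) : bool :=
  match t with
  | Var _ => true
  | App M _ => head_var_app M
  | Lam _ => false
  end.

Fixpoint is_hnf (t : term) : bool :=
  match t with
  | Lam M => is_hnf M
  | _ => head_var_app t
  end.

Definition solvable (M : term) : Prop := exists H, beta_red M H /\ is_hnf H.
Definition unsolvable (M : term) : Prop := ~ solvable M.

Inductive context : Type :=
| Hole : context
| CLam : context -> context
| CAppL : context -> term -> context
| CAppR : term -> context -> context.

Fixpoint fill (C : context) (M : term) : term :=
  match C with
  | Hole => M
  | CLam C' => Lam (fill C' M)
  | CAppL C' N => App (fill C' M) N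
  | CAppR N C' => App N (fill C' M)
  end.

Definition lambda_theory (eqv : term -> term -> Prop) : Prop :=
  [/\ (forall M, eqv M M),
      (forall M N, eqv M N -> eqv N M),
      (forall M N P, eqv M N -> eqv N P -> eqv M P),
      (forall M N P, eqv M N -> eqv (App M P) (App N P) /\ eqv (App P M) (App P N)
                                /\ eqv (Lam M) (Lam N)) &
      (forall M N, eqv (App (Lam M) N) (subst M 0 N))].

(* eta: M ~ \x. M x with x not free in M (de Bruijn: lift M) *)
Definition ext_lambda_theory (eqv : term -> term -> Prop) : Prop :=
  lambda_theory eqv /\ (forall M, eqv M (Lam (App (lift 0 M) (Var 0)))).

Section PPM.
Variables (R : realType) (X : Type).
Local Open Scope ereal_scope.
Implicit Types (p : X -> X -> \bar R).

Definition is_PPM p : Prop :=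
  [/\ (forall x y, 0 <= p x y),
      (forall x y, p x x <= p x y),
      (forall x y, p x y = p y x) &
      (forall x y z, p x y <= p x z + p z y - p z z)].

Definition ppm_le p (x y : X) : Prop := p x y <= p x x.
Definition ppm_eqv p (x y : X) : Prop := ppm_le p x y /\ ppm_le p y x.

Definition ppm_ball p (x : X) (eps : R) : set X :=
  [set y | p y x < p x x + eps%:E].

Definition ppm_open p (U : set X) : Prop :=
  exists F : set (X * R), (forall c, F c -> (0 < c.2)%R) /\
    U = \bigcup_(c in F) ppm_ball p c.1 c.2.

Definition ppm_continuous p (f : X -> X) : Prop :=
  forall U, ppm_open p U -> ppm_open p (f @^-1` U).

Definition ppm_generic p (x : X) : Prop := forall y, ppm_le p x y.
End PPM.

Definition lambda_PPM (R : realType) (p : term -> term -> \bar R) : Prop :=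
  [/\ is_PPM p, lambda_theory (ppm_eqv p) &
      forall C : context, ppm_continuous p (fill C)].

Definition ext_lambda_PPM (R : realType) (p : term -> term -> \bar R) : Prop :=
  [/\ is_PPM p, ext_lambda_theory (ppm_eqv p) &
      forall C : context, ppm_continuous p (fill C)].

Definition sensible_PPM (R : realType) (p : term -> term -> \bar R) : Prop :=
  (forall M, unsolvable M -> ppm_generic p M) /\
  (forall M, solvable M -> ~ ppm_generic p M).

Definition p_ctx (R : realType) (e : nat -> context) (M N : term) : \bar R :=
  esum [set n : nat | unsolvable (fill (e n) M) \/ unsolvable (fill (e n) N)]
       (fun n => (((2 : R) ^+ n)^-1)%:E).

(* Write M <= N when every context making M solvable also makes N solvable.
   If a context C_n separates M from N then p(M,N) >= p(M,M) + 2^-n, so <= is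
   exactly the preorder induced by p_ctx: unsolvable terms are least, and no
   solvable term lies below Omega. Being defined through contexts, <= is a
   congruence; that it contains beta and eta is shown with non-idempotent
   intersection types. Typings are preserved by beta-reduction and
   beta-expansion and, because every type is an arrow, by eta in both
   directions; moreover typability characterises solvability, since typings
   survive expansion from a head normal form and every head step strictly
   shrinks a derivation. Finally, contexts act continuously: the weights beyond
   some K sum to less than eps, and once p(N,M) < p(M,M) + delta with delta
   below the weights of the contexts C_i[C[-]] (i < K), every such context
   that makes C[N] unsolvable also makes C[M] unsolvable. *)

From Pilot Require Import Defs.
From mathcomp Require Import all_boot all_order all_algebra all_classical all_reals.
From mathcomp Require Import ereal sequences esum.
From mathcomp Require Import ring lra.
From Stdlib Require Import Permutation Relations.
From Stdlib Require List.
From mathcomp Require Import zify.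
Set Implicit Arguments.
Unset Strict Implicit.
Unset Printing Implicit Defensive.

(** * Multiset types *)

Section MultisetRelation.
Variables (A : Type) (r : A -> A -> Prop).

Definition mset_rel (m m' : seq A) : Prop :=
  exists l, Permutation m l /\ List.Forall2 r l m'.

Lemma forall2_perm_r l m m' : List.Forall2 r l m -> Permutation m m' ->
  exists l', Permutation l l' /\ List.Forall2 r l' m'.
Proof.
move=> /List.Forall2_flip F P; have [l' [P' /List.Forall2_flip F']] := Permutation_Forall2 P F.
by exists l'.
Qed.

Lemma forall2_trans l1 l2 l3 :
  List.Forall (fun a => forall b c, r a b -> r b c -> r a c) l1 ->
  List.Forall2 r l1 l2 -> List.Forall2 r l2 l3 -> List.Forall2 r l1 l3.
Proof.
move=> T F; elim: F l3 T => [|a b l1' l2' ab _ IH] l3 T F'; first by inversion F'.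
inversion F'; inversion T; subst; constructor; eauto.
Qed.

Lemma mset_rel_refl m : List.Forall (fun a => r a a) m -> mset_rel m m.
Proof. by move=> T; exists m; split=> //; elim: T => //; constructor. Qed.

Lemma mset_rel_sym m m' : List.Forall (fun a => forall b, r a b -> r b a) m ->
  mset_rel m m' -> mset_rel m' m.
Proof.
move=> S [l [P F]].
have /List.Forall2_flip F' : List.Forall2 (fun a b => r b a) l m'.
  elim: F (Permutation_Forall P S) => // a b l1 l2 ab _ IH T.
  by inversion T; constructor; auto.
have [l' [P' F'']] := forall2_perm_r F' (Permutation_sym P).
by exists l'.
Qed.

Lemma mset_rel_trans m1 m2 m3 :
  List.Forall (fun a => forall b c, r a b -> r b c -> r a c) m1 ->
  mset_rel m1 m2 -> mset_rel m2 m3 -> mset_rel m1 m3.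
Proof.
move=> T [l [P F]] [l' [P' F']]; have [l0 [P0 F0]] := forall2_perm_r F P'.
exists l0; split; first exact: perm_trans P P0.
exact: forall2_trans (Permutation_Forall (perm_trans P P0) T) F0 F'.
Qed.

End MultisetRelation.

Lemma perm_nil_r (A : Type) (l : seq A) : Permutation l [::] -> l = [::].
Proof. by move=> /Permutation_sym /Permutation_nil. Qed.

(* [Ty f] is the infinite arrow [f 0 -> f 1 -> ...] whose sources are multisets
   of types (lists up to [mteq]); with no atoms every type is an arrow. *)
Inductive ty : Type := Ty of (nat -> seq ty).

Fixpoint ty_nested_ind (P : ty -> Prop)
    (IH : forall f, (forall i, List.Forall P (f i)) -> P (Ty f)) (t : ty) : P t :=
  let: Ty f := t in
  IH f (fun i => (fix all_P (l : seq ty) : List.Forall P l :=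
    if l is a :: l' then List.Forall_cons a (ty_nested_ind IH a) (all_P l')
    else List.Forall_nil P) (f i)).

Inductive teq : ty -> ty -> Prop :=
  TeqIntro f g : (forall i, mset_rel teq (f i) (g i)) -> teq (Ty f) (Ty g).

Notation mteq := (mset_rel teq).

Lemma teq_refl t : teq t t.
Proof. by elim/ty_nested_ind: t => f IH; constructor=> i; apply: mset_rel_refl. Qed.

Lemma teq_sym t t' : teq t t' -> teq t' t.
Proof.
elim/ty_nested_ind: t t' => f IH t' E; inversion E as [f' g E']; subst.
constructor=> i.
by apply: mset_rel_sym (E' i); apply: List.Forall_impl (IH i) => t IHt t' /IHt.
Qed.

Lemma teq_trans t1 t2 t3 : teq t1 t2 -> teq t2 t3 -> teq t1 t3.
Proof.
elim/ty_nested_ind: t1 t2 t3 => f IH t2 t3 E E'.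
inversion E as [f' g Efg]; subst; inversion E' as [g' h Egh]; subst.
by constructor=> i; apply: mset_rel_trans (Efg i) (Egh i); apply: List.Forall_impl (IH i).
Qed.

Lemma mteq_refl m : mteq m m.
Proof. by apply: mset_rel_refl; elim: m => // t m IH; constructor=> //; apply: teq_refl. Qed.

Lemma perm_mteq m m' : Permutation m m' -> mteq m m'.
Proof.
by move=> P; have [l [P' F]] := mteq_refl m'; exists l; split=> //; apply: perm_trans P'.
Qed.

Lemma mteq_sym m m' : mteq m m' -> mteq m' m.
Proof.
apply: mset_rel_sym; elim: m => // t m IH; constructor=> //; exact: teq_sym.
Qed.

Lemma mteq_trans m1 m2 m3 : mteq m1 m2 -> mteq m2 m3 -> mteq m1 m3.
Proof.
apply: mset_rel_trans; elim: m1 => // t m IH; constructor=> //; exact: teq_trans.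
Qed.

Definition arrow (m : seq ty) (t : ty) : ty :=
  let: Ty f := t in Ty (fun i => if i is j.+1 then f j else m).

Lemma arrow_inj m t m' t' : arrow m t = arrow m' t' -> m = m' /\ t = t'.
Proof.
case: t t' => f [g] [E]; split; first exact: (congr1 (fun h => h 0) E).
by congr Ty; apply: funext => i; exact: (congr1 (fun h => h i.+1) E).
Qed.

Lemma arrow_surj t : exists m t', t = arrow m t'.
Proof. by case: t => f; exists (f 0), (Ty (fun i => f i.+1)); congr Ty; apply: funext; case. Qed.

Lemma teq_arrow m m' t t' : mteq m m' -> teq t t' -> teq (arrow m t) (arrow m' t').
Proof. by case: t t' => f [g] Em E; inversion E; subst; constructor=> -[]. Qed.

Lemma teq_arrow_inv m t T : teq (arrow m t) T ->
  exists m' t', [/\ T = arrow m' t', mteq m m' & teq t t'].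
Proof.
have [m' [t' ->]] := arrow_surj T; case: t t' => f [g] E; inversion E as [f' g' E']; subst.
by exists m', (Ty g); split=> //; [exact: (E' 0) | constructor=> i; exact: (E' i.+1)].
Qed.

(* [eins c] and [erem c] insert and delete the slot of de Bruijn index [c],
   following [lift c] and [subst _ c _] on terms. *)
Definition env := nat -> seq ty.

Definition eeq (G D : env) : Prop := forall i, Permutation (G i) (D i).
Definition env0 : env := fun _ => [::].
Definition eadd (G D : env) : env := fun i => G i ++ D i.
Definition esing (x : nat) (t : ty) : env := fun i => if i == x then [:: t] else [::].
Definition etail (G : env) : env := fun i => G i.+1.
Definition econs (m : seq ty) (G : env) : env := fun i => if i is j.+1 then G j else m.
Definition eins (c : nat) (G : env) : env :=
  fun i => if (i < c)%N then G i else if i == c then [::] else G i.-1.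
Definition erem (c : nat) (G : env) : env := fun i => if (i < c)%N then G i else G i.+1.

Lemma eeq_refl G : eeq G G. Proof. by []. Qed.
#[local] Hint Resolve Permutation_refl eeq_refl teq_refl mteq_refl : core.

Lemma eeq_sym G D : eeq G D -> eeq D G.
Proof. by move=> E i; apply: Permutation_sym. Qed.

Lemma eeq_trans G D E : eeq G D -> eeq D E -> eeq G E.
Proof. by move=> E1 E2 i; apply: perm_trans (E1 i) (E2 i). Qed.

Lemma eadd_eeq G G' D D' : eeq G G' -> eeq D D' -> eeq (eadd G D) (eadd G' D').
Proof. by move=> E E' i; apply: Permutation_app. Qed.

Lemma etail_eeq G G' : eeq G G' -> eeq (etail G) (etail G').
Proof. by move=> E i; apply: E. Qed.

Lemma erem_eeq c G G' : eeq G G' -> eeq (erem c G) (erem c G').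
Proof. by move=> E i; rewrite /erem; case: ifP. Qed.

Lemma eins_eeq c G G' : eeq G G' -> eeq (eins c G) (eins c G').
Proof. by move=> E i; rewrite /eins; case: ifP => //; case: ifP. Qed.

Lemma eaddA G D E : eeq (eadd G (eadd D E)) (eadd (eadd G D) E).
Proof. by move=> i; rewrite /eadd catA. Qed.

Lemma eadd0 G : eeq (eadd G env0) G.
Proof. by move=> i; rewrite /eadd cats0. Qed.

Lemma eadd0l G : eeq (eadd env0 G) G.
Proof. by []. Qed.

Lemma eaddACA A B C D : eeq (eadd (eadd A B) (eadd C D)) (eadd (eadd A C) (eadd B D)).
Proof.
move=> i; rewrite /eadd -!catA; apply: Permutation_app_head; rewrite !catA.
by apply: Permutation_app_tail; apply: Permutation_app_comm.
Qed.

Lemma erem_add c G D : erem c (eadd G D) = eadd (erem c G) (erem c D).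
Proof. by apply: funext => i; rewrite /erem /eadd; case: ifP. Qed.

Lemma eins_add c G D : eins c (eadd G D) = eadd (eins c G) (eins c D).
Proof. by apply: funext => i; rewrite /eins /eadd; case: ifP => //; case: ifP. Qed.

Lemma etail_add G D : etail (eadd G D) = eadd (etail G) (etail D).
Proof. by []. Qed.

Lemma eins_env0 c : eins c env0 = env0.
Proof. by apply: funext => i; rewrite /eins; case: ifP => //; case: ifP. Qed.

Lemma erem_env0 c : erem c env0 = env0.
Proof. by apply: funext => i; rewrite /erem; case: ifP. Qed.

Lemma eins_sing c x s : eins c (esing x s) = esing (if (x < c)%N then x else x.+1) s.
Proof. by apply: funext => i; rewrite /eins /esing; do ![case: ifP] => //; lia. Qed.

Lemma erem_sing c x s : erem c (esing x s) =
  if (x < c)%N then esing x s else if x == c then env0 else esing x.-1 s.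
Proof. by apply: funext => i; rewrite /erem /esing /env0; do ![case: ifP] => //; lia. Qed.

Lemma etail_eins c G : etail (eins c.+1 G) = eins c (etail G).
Proof.
by apply: funext => i; rewrite /etail /eins ltnS eqSS; do ![case: ifP] => // *; congr G; lia.
Qed.

Lemma etail_erem c G : etail (erem c.+1 G) = erem c (etail G).
Proof. by []. Qed.

Lemma erem_eins c G : erem c (eins c G) = G.
Proof. by apply: funext => i; rewrite /erem /eins; do ![case: ifP] => //; lia. Qed.

Lemma eins_self c G : eins c G c = [::].
Proof. by rewrite /eins ltnn eqxx. Qed.

(** * Non-idempotent intersection typing *)

(* [typ G M t n] is a derivation of size [n]; [typs G N m n] types [N] once
   for each type in the multiset [m], adding up the environments. As arguments
   are typed without duplication, contracting a redex shrinks the size. *)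
Inductive typ : env -> term -> ty -> nat -> Prop :=
| tVar G x s t : eeq G (esing x s) -> teq s t -> typ G (Var x) t 1
| tLam G Gb M m t n : typ Gb M t n -> eeq G (etail Gb) -> mteq m (Gb 0) ->
    typ G (Lam M) (arrow m t) n.+1
| tApp G G1 D M N m t n1 n2 : typ G1 M (arrow m t) n1 -> typs D N m n2 ->
    eeq G (eadd G1 D) -> typ G (App M N) t (n1 + n2).+1
with typs : env -> term -> seq ty -> nat -> Prop :=
| tsNil G N : eeq G env0 -> typs G N [::] 0
| tsCons G G1 D N s m n1 n2 : typ G1 N s n1 -> typs D N m n2 -> eeq G (eadd G1 D) ->
    typs G N (s :: m) (n1 + n2).

Lemma typ_Var_inv G x t n : typ G (Var x) t n ->
  n = 1 /\ exists s, eeq G (esing x s) /\ teq s t.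
Proof. by move=> H; inversion H; subst; split=> //; exists s. Qed.

Lemma typ_Lam_inv G M T n : typ G (Lam M) T n -> exists Gb m t n',
  [/\ T = arrow m t, n = n'.+1, typ Gb M t n', eeq G (etail Gb) & mteq m (Gb 0)].
Proof. by move=> H; inversion H; subst; exists Gb, m, t, n0. Qed.

Lemma typ_App_inv G M N t n : typ G (App M N) t n -> exists G1 D m n1 n2,
  [/\ n = (n1 + n2).+1, typ G1 M (arrow m t) n1, typs D N m n2 & eeq G (eadd G1 D)].
Proof. by move=> H; inversion H; subst; exists G1, D, m, n1, n2. Qed.

Lemma typs_nil_inv G N n : typs G N [::] n -> n = 0 /\ eeq G env0.
Proof. by move=> H; inversion H. Qed.

Lemma typs_cons_inv G N s m n : typs G N (s :: m) n -> exists G1 D n1 n2,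
  [/\ n = n1 + n2, typ G1 N s n1, typs D N m n2 & eeq G (eadd G1 D)].
Proof. by move=> H; inversion H; subst; exists G1, D, n1, n2. Qed.

Lemma typ_eeq G G' M t n : typ G M t n -> eeq G' G -> typ G' M t n.
Proof.
case=> {G M t n}.
- by move=> G x s t E' st E; apply: tVar (eeq_trans E E') st.
- by move=> G Gb M m t n HM E' Em E; apply: tLam HM (eeq_trans E E') Em.
- by move=> G G1 D M N m t n1 n2 HM HN E' E; apply: tApp HM HN (eeq_trans E E').
Qed.

Lemma typs_eeq G G' N m n : typs G N m n -> eeq G' G -> typs G' N m n.
Proof.
case=> {G N m n}.
- by move=> G N E' E; apply: tsNil (eeq_trans E E').
- by move=> G G1 D N s m n1 n2 HN Hm E' E; apply: tsCons HN Hm (eeq_trans E E').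
Qed.

Lemma typ_teq G M t t' n : teq t t' -> typ G M t n -> typ G M t' n.
Proof.
move=> + H; elim: H t' => {G M t n}.
- by move=> G x s t E st t' tt'; apply: tVar E (teq_trans st tt').
- move=> G Gb M m t n _ IH E Em _ /teq_arrow_inv [m' [t' [-> mm' tt']]].
  exact: tLam (IH _ tt') E (mteq_trans (mteq_sym mm') Em).
- move=> G G1 D M N m t n1 n2 _ IH HN E t' tt'.
  exact: tApp (IH _ (teq_arrow (mteq_refl m) tt')) HN E.
Qed.

Lemma typs_forall2 D N l m n : List.Forall2 teq l m -> typs D N l n -> typs D N m n.
Proof.
move=> F; elim: F D n => // s s' l' m' ss' _ IH D n.
move=> /typs_cons_inv [G1 [D' [n1 [n2 [-> H1 H2 E]]]]].
exact: tsCons (typ_teq ss' H1) (IH _ _ H2) E.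
Qed.

Lemma typs_perm D N m m' n : Permutation m m' -> typs D N m n -> typs D N m' n.
Proof.
move=> P; elim: P D n => {m m'} [//| s m m' _ IH | s s' m | m1 m2 m3 _ IH1 _ IH2] D n.
- move=> /typs_cons_inv [G1 [D' [n1 [n2 [-> H1 H2 E]]]]].
  exact: tsCons H1 (IH _ _ H2) E.
- move=> /typs_cons_inv [G1 [D1 [n1 [n2 [-> H1 + E1]]]]].
  move=> /typs_cons_inv [G2 [D2 [n3 [n4 [-> H2 H3 E2]]]]].
  rewrite addnCA; apply: tsCons H2 (tsCons H1 H3 (eeq_refl _)) _.
  apply: eeq_trans E1 _; apply: eeq_trans (eadd_eeq (eeq_refl _) E2) _.
  by move=> i; rewrite /eadd !catA; apply: Permutation_app_tail; apply: Permutation_app_comm.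
- by move=> H; apply: IH2; apply: IH1.
Qed.

Lemma typs_mteq D N m m' n : mteq m m' -> typs D N m n -> typs D N m' n.
Proof. by move=> [l [P F]] H; apply: typs_forall2 F (typs_perm P H). Qed.

Lemma typs_cat G N a b n : typs G N (a ++ b) n -> exists Ga Gb na nb,
  [/\ n = na + nb, typs Ga N a na, typs Gb N b nb & eeq G (eadd Ga Gb)].
Proof.
elim: a G n => [|s a IH] G n /=; first by move=> H; exists env0, G, 0, n; split=> //; apply: tsNil.
move=> /typs_cons_inv [G1 [D [n1 [n2 [-> H1 /IH [Ga [Gb [na [nb [-> Ha Hb E]]]]] E']]]]].
exists (eadd G1 Ga), Gb, (n1 + na), nb; split; rewrite ?addnA //; first exact: tsCons H1 Ha _.
by apply: eeq_trans E' _; apply: eeq_trans (eadd_eeq (eeq_refl _) E) _; apply: eaddA.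
Qed.

Lemma typs_app G N a b Ga Gb na nb : typs Ga N a na -> typs Gb N b nb ->
  eeq G (eadd Ga Gb) -> typs G N (a ++ b) (na + nb).
Proof.
elim: a G Ga na => [|s a IH] G Ga na /=.
  move=> /typs_nil_inv [-> E] Hb E'; rewrite add0n; apply: (typs_eeq Hb).
  by apply: eeq_trans E' (eeq_trans (eadd_eeq E (eeq_refl _)) (eadd0l _)).
move=> /typs_cons_inv [G1 [D [n1 [n2 [-> H1 H2 E]]]]] Hb E'.
rewrite -addnA; apply: tsCons H1 (IH (eadd D Gb) _ _ H2 Hb (eeq_refl _)) _.
apply: eeq_trans E' _; apply: eeq_trans (eadd_eeq E (eeq_refl _)) _.
by apply: eeq_sym; apply: eaddA.
Qed.

Lemma typs_one G N s n : typ G N s n -> typs G N [:: s] n.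
Proof.
move=> H; rewrite -[n]addn0; apply: tsCons H (tsNil N (eeq_refl _)) _.
by apply: eeq_sym; apply: eadd0.
Qed.

Lemma typs_one_inv G N s n : typs G N [:: s] n -> typ G N s n.
Proof.
move=> /typs_cons_inv [G1 [D [n1 [n2 [-> H1 /typs_nil_inv [-> E] E']]]]].
rewrite addn0; apply: (typ_eeq H1).
exact: eeq_trans E' (eeq_trans (eadd_eeq (eeq_refl _) E) (eadd0 _)).
Qed.

(** * Weakening and substitution *)

Section AdditiveEnvMap.
Variable P : env -> env.
Hypothesis P_eeq : forall G G', eeq G G' -> eeq (P G) (P G').
Hypothesis P_env0 : P env0 = env0.
Hypothesis P_add : forall G D, P (eadd G D) = eadd (P G) (P D).

Lemma typs_map N N' : (forall G s n, typ G N s n -> typ (P G) N' s n) ->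
  forall D m n, typs D N m n -> typs (P D) N' m n.
Proof.
move=> HN D m; elim: m D => [|s m IH] D n.
  by move=> /typs_nil_inv [-> /P_eeq E]; apply: tsNil; rewrite -P_env0.
move=> /typs_cons_inv [G1 [D' [n1 [n2 [-> H1 H2 /P_eeq E]]]]].
by apply: tsCons (HN _ _ _ H1) (IH _ _ H2) _; rewrite -P_add.
Qed.

End AdditiveEnvMap.

Lemma lift_typ M c G t n : typ G M t n -> typ (eins c G) (Defs.lift c M) t n.
Proof.
elim: M c G t n => [x|M1 IH1 M2 IH2|M IH] c G t n /=.
- move=> /typ_Var_inv [-> [s [/(eins_eeq c) E st]]]; rewrite eins_sing in E.
  by case: ifP E => _ E; apply: tVar E st.
- move=> /typ_App_inv [G1 [D [m [n1 [n2 [-> H1 H2 E]]]]]].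
  apply: tApp (IH1 c _ _ _ H1) (typs_map (@eins_eeq c) (eins_env0 c) (@eins_add c) (IH2 c) H2) _.
  by rewrite -eins_add; apply: eins_eeq.
- move=> /typ_Lam_inv [Gb [m [t' [n' [-> -> H E Em]]]]].
  by apply: tLam (IH c.+1 _ _ _ H) _ Em; rewrite etail_eins; apply: eins_eeq.
Qed.

Lemma lift_typs c N D m n : typs D N m n -> typs (eins c D) (Defs.lift c N) m n.
Proof. exact: (typs_map (@eins_eeq c) (eins_env0 c) (@eins_add c) (@lift_typ N c)). Qed.

Lemma typ_lift_strengthen M c G t n : typ G (Defs.lift c M) t n -> typ (erem c G) M t n.
Proof.
elim: M c G t n => [x|M1 IH1 M2 IH2|M IH] c G t n /=.
- case: ifP => xc /typ_Var_inv [-> [s [/(erem_eeq c) E st]]]; apply: tVar (eeq_trans E _) st;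
    rewrite erem_sing ?xc //.
  by have [-> ->] : (x.+1 < c)%N = false /\ (x.+1 == c) = false by lia.
- move=> /typ_App_inv [G1 [D [m [n1 [n2 [-> H1 H2 E]]]]]].
  apply: tApp (IH1 c _ _ _ H1) (typs_map (@erem_eeq c) (erem_env0 c) (@erem_add c) (IH2 c) H2) _.
  by rewrite -erem_add; apply: erem_eeq.
- move=> /typ_Lam_inv [Gb [m [t' [n' [-> -> H E Em]]]]].
  by apply: tLam (IH c.+1 _ _ _ H) _ Em; rewrite etail_erem; apply: erem_eeq.
Qed.

Lemma typs_lift_strengthen c N D m n : typs D (Defs.lift c N) m n -> typs (erem c D) N m n.
Proof.
exact: (typs_map (@erem_eeq c) (erem_env0 c) (@erem_add c) (@typ_lift_strengthen N c)).
Qed.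

Lemma typs_unused c N : (forall G s n, typ G N s n -> G c = [::]) ->
  forall D m n, typs D N m n -> D c = [::].
Proof.
move=> HN D m; elim: m D => [|s m IH] D n.
  by move=> /typs_nil_inv [_ /(_ c) E]; apply: perm_nil_r.
move=> /typs_cons_inv [G1 [D' [n1 [n2 [_ H1 H2 /(_ c) E]]]]].
by apply: perm_nil_r; rewrite /eadd (HN _ _ _ H1) (IH _ _ H2) in E.
Qed.

Lemma typ_lift_unused M c G t n : typ G (Defs.lift c M) t n -> G c = [::].
Proof.
elim: M c G t n => [x|M1 IH1 M2 IH2|M IH] c G t n /=.
- case: ifP => xc /typ_Var_inv [_ [s [/(_ c) E _]]]; apply: perm_nil_r;
    apply: perm_trans E _; rewrite /esing; case: ifP => // /eqP; lia.
- move=> /typ_App_inv [G1 [D [m [n1 [n2 [_ H1 H2 /(_ c) E]]]]]].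
  by apply: perm_nil_r; rewrite /eadd (IH1 _ _ _ _ H1) (typs_unused (IH2 c) H2) in E.
- move=> /typ_Lam_inv [Gb [m [t' [n' [_ _ H /(_ c) E _]]]]].
  by apply: perm_nil_r; rewrite /etail (IH _ _ _ _ H) in E.
Qed.

Lemma typs_lift_unused c N D m n : typs D (Defs.lift c N) m n -> D c = [::].
Proof. exact: (typs_unused (@typ_lift_unused N c)). Qed.

Lemma typs_split_at k D N G G1 G2 n : eeq G (eadd G1 G2) -> typs D N (G k) n ->
  exists D1 D2 n1 n2,
    [/\ n = n1 + n2, typs D1 N (G1 k) n1, typs D2 N (G2 k) n2 & eeq D (eadd D1 D2)].
Proof. by move=> E /(typs_perm (E k)) /typs_cat. Qed.

Lemma eadd_erem_split k G G1 G2 D D1 D2 : eeq G (eadd G1 G2) -> eeq D (eadd D1 D2) ->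
  eeq (eadd (erem k G) D) (eadd (eadd (erem k G1) D1) (eadd (erem k G2) D2)).
Proof.
move=> EG ED; apply: eeq_trans (eadd_eeq (erem_eeq k EG) ED) _.
by rewrite erem_add; apply: eaddACA.
Qed.

Lemma subst_typ_Var x k N G t n D nN : typ G (Var x) t n -> typs D N (G k) nN ->
  exists2 n', (n' <= n + nN)%N & typ (eadd (erem k G) D) (subst (Var x) k N) t n'.
Proof.
move=> /typ_Var_inv [-> [s [E st]]] HN /=.
have E' := erem_eeq k E; rewrite erem_sing in E'.
have Gk := E k; rewrite /esing in Gk.
case: (eqVneq x k) => [xk | /negbTE xk]; [subst x | rewrite eq_sym xk in Gk; rewrite xk in E' *].
  rewrite ltnn eqxx in E' Gk *; have {}HN := typ_teq st (typs_one_inv (typs_perm Gk HN)).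
  by exists nN => //; apply: (typ_eeq HN); exact: (eeq_trans (eadd_eeq E' (eeq_refl D)) (eadd0l D)).
move: HN; rewrite (perm_nil_r Gk) => /typs_nil_inv [-> ED].
exists 1 => //; case: ifP E' => _ E'; exact: tVar (eeq_trans (eadd_eeq E' ED) (eadd0 _)) st.
Qed.

Lemma subst_typs_of_typ M k N :
  (forall G t n D nN, typ G M t n -> typs D N (G k) nN ->
     exists2 n', (n' <= n + nN)%N & typ (eadd (erem k G) D) (subst M k N) t n') ->
  forall G m n D nN, typs G M m n -> typs D N (G k) nN ->
     exists2 n', (n' <= n + nN)%N & typs (eadd (erem k G) D) (subst M k N) m n'.
Proof.
move=> IH G m; elim: m G => [|s m IHm] G n D nN.
  move=> /typs_nil_inv [-> E]; rewrite (perm_nil_r (E k)) => /typs_nil_inv [-> ED].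
  exists 0 => //; apply: tsNil; apply: eeq_trans (eadd_eeq (erem_eeq k E) ED) _.
  by rewrite erem_env0; apply: eadd0.
move=> /typs_cons_inv [G1 [G2 [n1 [n2 [-> H1 H2 E]]]]].
move=> /(typs_split_at E) [D1 [D2 [nN1 [nN2 [-> HN1 HN2 ED]]]]].
have [n1' le1 H1'] := IH _ _ _ _ _ H1 HN1; have [n2' le2 H2'] := IHm _ _ _ _ H2 HN2.
exists (n1' + n2'); first lia.
exact: tsCons H1' H2' (eadd_erem_split k E ED).
Qed.

Lemma subst_typ M k N G t n D nN : typ G M t n -> typs D N (G k) nN ->
  exists2 n', (n' <= n + nN)%N & typ (eadd (erem k G) D) (subst M k N) t n'.
Proof.
elim: M k N G t n D nN => [x|M1 IH1 M2 IH2|M IH] k N G t n D nN.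
- exact: subst_typ_Var.
- move=> /typ_App_inv [G1 [G2 [m [n1 [n2 [-> H1 H2 E]]]]]].
  move=> /(typs_split_at E) [D1 [D2 [nN1 [nN2 [-> HN1 HN2 ED]]]]].
  have [n1' le1 H1'] := IH1 _ _ _ _ _ _ _ H1 HN1.
  have [n2' le2 H2'] := subst_typs_of_typ (IH2 k N) H2 HN2.
  exists (n1' + n2').+1; first lia.
  exact: tApp H1' H2' (eadd_erem_split k E ED).
- move=> /typ_Lam_inv [Gb [m [t' [n' [-> -> H E Em]]]]] HN /=.
  have /(lift_typs 0) HN' : typs D N (Gb k.+1) nN := typs_perm (E k) HN.
  have [n'' le H'] := IH _ _ _ _ _ _ _ H HN'.
  exists n''.+1; first lia.
  apply: tLam H' _ _; last by rewrite /eadd /erem /eins /= cats0.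
  by rewrite etail_add etail_erem; apply: eadd_eeq (erem_eeq k E) _; move=> i.
Qed.

Lemma antisubst_typ_lift k N M G t n : typ G M t n -> exists G' D n1 n2,
  [/\ typ G' (Defs.lift k M) t n1, typs D N (G' k) n2 & eeq G (eadd (erem k G') D)].
Proof.
move=> /(lift_typ k) H; exists (eins k G), env0, n, 0; split=> //.
  by rewrite eins_self; apply: tsNil.
by rewrite erem_eins; apply: eeq_sym; apply: eadd0.
Qed.

Lemma antisubst_typ_Var x k N G t n : typ G (subst (Var x) k N) t n -> exists G' D n1 n2,
  [/\ typ G' (Var x) t n1, typs D N (G' k) n2 & eeq G (eadd (erem k G') D)].
Proof.
rewrite /=; case: ltnP => [xk|kx]; first by move=> /(antisubst_typ_lift k N); rewrite /= xk.
case: eqP => [-> H|/eqP xk].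
  exists (esing k t), G, 1, n; split; first exact: tVar.
    by rewrite /esing eqxx; apply: typs_one.
  by rewrite erem_sing ltnn eqxx; apply: eeq_sym; apply: eadd0l.
move=> /(antisubst_typ_lift k N); rewrite /=.
by have [-> ->] : (x.-1 < k)%N = false /\ x.-1.+1 = x by lia.
Qed.

Lemma antisubst_typs_of_typ M k N :
  (forall G t n, typ G (subst M k N) t n -> exists G' D n1 n2,
     [/\ typ G' M t n1, typs D N (G' k) n2 & eeq G (eadd (erem k G') D)]) ->
  forall G m n, typs G (subst M k N) m n -> exists G' D n1 n2,
     [/\ typs G' M m n1, typs D N (G' k) n2 & eeq G (eadd (erem k G') D)].
Proof.
move=> IH G m; elim: m G => [|s m IHm] G n.
  move=> /typs_nil_inv [_ E]; exists env0, env0, 0, 0; split; try exact: tsNil.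
  by rewrite erem_env0; apply: eeq_trans E (eeq_sym (eadd0 _)).
move=> /typs_cons_inv [G1 [G2 [_ [_ [_ /IH H1 /IHm H2 E]]]]].
have [G1' [D1 [n1 [n1' [H1' HN1 E1]]]]] := H1.
have [G2' [D2 [n2 [n2' [H2' HN2 E2]]]]] := H2.
exists (eadd G1' G2'), (eadd D1 D2), (n1 + n2), (n1' + n2'); split.
- exact: tsCons H1' H2' (eeq_refl _).
- exact: typs_app HN1 HN2 (eeq_refl _).
- by apply: eeq_trans E _; apply: eeq_trans (eadd_eeq E1 E2) _; rewrite erem_add; apply: eaddACA.
Qed.

Lemma antisubst_typ M k N G t n : typ G (subst M k N) t n -> exists G' D n1 n2,
  [/\ typ G' M t n1, typs D N (G' k) n2 & eeq G (eadd (erem k G') D)].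
Proof.
elim: M k N G t n => [x|M1 IH1 M2 IH2|M IH] k N G t n.
- exact: antisubst_typ_Var.
- move=> /typ_App_inv [G1 [G2 [m [_ [_ [_ /IH1 H1 /(antisubst_typs_of_typ (IH2 k N)) H2 E]]]]]].
  have [G1' [D1 [n1 [n1' [H1' HN1 E1]]]]] := H1.
  have [G2' [D2 [n2 [n2' [H2' HN2 E2]]]]] := H2.
  exists (eadd G1' G2'), (eadd D1 D2), (n1 + n2).+1, (n1' + n2'); split.
  + exact: tApp H1' H2' (eeq_refl _).
  + exact: typs_app HN1 HN2 (eeq_refl _).
  + by apply: eeq_trans E _; apply: eeq_trans (eadd_eeq E1 E2) _; rewrite erem_add; apply: eaddACA.
- move=> /typ_Lam_inv [Gb [m [t' [_ [-> _ /IH [Gb' [D [n1 [n2 [H HN E]]]]] EG Em]]]]].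
  have D0 := typs_lift_unused HN; have {}HN := typs_lift_strengthen HN.
  exists (etail Gb'), (erem 0 D), n1.+1, n2; split=> //.
    apply: tLam H (eeq_refl _) (mteq_trans Em (perm_mteq _)).
    by apply: perm_trans (E 0) _; rewrite /eadd /erem /= D0 cats0.
  by apply: eeq_trans EG _; apply: eeq_trans (etail_eeq E) _.
Qed.

(** * Typability, solvability and the observational preorder *)

Lemma typ_redex_reduce G M N t n : typ G (App (Lam M) N) t n ->
  exists2 n', (n' < n)%N & typ G (subst M 0 N) t n'.
Proof.
move=> /typ_App_inv [G1 [D [m [n1 [n2 [-> /typ_Lam_inv H HN E]]]]]].
have [Gb [m' [t' [n1' [/arrow_inj [<- <-] -> HM EG Em]]]]] := H.
have [n' le HS] := subst_typ HM (typs_mteq Em HN).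
exists n'; first lia.
by apply: (typ_eeq HS); apply: eeq_trans E (eadd_eeq EG (eeq_refl D)).
Qed.

Lemma typ_redex_expand G M N t n : typ G (subst M 0 N) t n ->
  exists n', typ G (App (Lam M) N) t n'.
Proof.
move=> /antisubst_typ [G' [D [n1 [n2 [HM HN E]]]]].
by exists (n1.+1 + n2).+1; apply: tApp (tLam HM (eeq_refl _) (mteq_refl _)) HN E.
Qed.

Definition typ_le (M N : term) : Prop :=
  forall G t n, typ G M t n -> exists n', typ G N t n'.

Definition typable (M : term) : Prop := exists G t n, typ G M t n.

Lemma typ_le_trans M N P : typ_le M N -> typ_le N P -> typ_le M P.
Proof. by move=> MN NP G t n /MN [n' /NP]. Qed.

Lemma typ_le_typable M N : typ_le M N -> typable M -> typable N.
Proof. by move=> MN [G [t [n /MN [n' H]]]]; exists G, t, n'. Qed.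

Lemma typs_le N N' D m n : typ_le N N' -> typs D N m n -> exists n', typs D N' m n'.
Proof.
move=> NN'; elim: m D n => [|s m IH] D n.
  by move=> /typs_nil_inv [_ E]; exists 0; apply: tsNil.
move=> /typs_cons_inv [G1 [D' [n1 [n2 [_ /NN' [n1' H1] /IH [n2' H2] E]]]]].
by exists (n1' + n2'); apply: tsCons H1 H2 E.
Qed.

Lemma typ_le_fill C M N : typ_le M N -> typ_le (fill C M) (fill C N).
Proof.
move=> MN; elim: C => [|C IH|C IH P|P C IH] G t n /=; first exact: MN.
- move=> /typ_Lam_inv [Gb [m [t' [n' [-> _ /IH [n'' H] E Em]]]]].
  by exists n''.+1; apply: tLam H E Em.
- move=> /typ_App_inv [G1 [D [m [n1 [n2 [_ /IH [n1' H1] H2 E]]]]]].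
  by exists (n1' + n2).+1; apply: tApp H1 H2 E.
- move=> /typ_App_inv [G1 [D [m [n1 [n2 [_ H1 /(typs_le IH) [n2' H2] E]]]]]].
  by exists (n1 + n2').+1; apply: tApp H1 H2 E.
Qed.

Lemma beta_typ_expand M M' : beta M M' -> typ_le M' M.
Proof.
elim=> {M M'} [M N|M M' N _ IH|M N N' _ IH|M M' _ IH].
- by move=> G t n; apply: typ_redex_expand.
- exact (typ_le_fill (C := CAppL Hole N) IH).
- exact (typ_le_fill (C := CAppR M Hole) IH).
- exact (typ_le_fill (C := CLam Hole) IH).
Qed.

Lemma beta_red_typ_expand M M' : beta_red M M' -> typ_le M' M.
Proof.
elim=> {M M'} [M M' /beta_typ_expand //|M G t n H|M1 M2 M3 _ IH1 _ IH2].
  by exists n.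
exact: typ_le_trans IH2 IH1.
Qed.

Lemma head_var_app_typ M t : head_var_app M -> exists G n, typ G M t n.
Proof.
elim: M t => [x|M1 IH1 M2 _|M _] //= t.
  by move=> _; exists (esing x t), 1; apply: tVar.
move=> /(IH1 (arrow [::] t)) [G [n H]]; exists G, (n + 0).+1.
by apply: tApp H (tsNil M2 (eeq_refl _)) (eeq_sym (eadd0 G)).
Qed.

Lemma hnf_typable M : is_hnf M -> typable M.
Proof.
elim: M => [x|M1 _ M2 _|M IH]; last first.
  move=> /= /IH [G [t [n H]]]; exists (etail G), (arrow (G 0) t), n.+1.
  exact: tLam H (eeq_refl _) (mteq_refl _).
all: move=> /(head_var_app_typ (Ty (fun=> [::]))) [G [n H]].
all: by exists G, (Ty (fun=> [::])), n.
Qed.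

Lemma solvable_typable M : solvable M -> typable M.
Proof.
move=> [H [/beta_red_typ_expand MH /hnf_typable]].
exact: typ_le_typable.
Qed.

Lemma typ_head_reduce G M t n : typ G M t n -> ~~ is_hnf M ->
  exists M' n', [/\ beta M M', typ G M' t n' & (n' < n)%N].
Proof.
elim: M G t n => [x|M1 IH1 M2 _|M IH] G t n //=.
  case: M1 IH1 => [y|P Q|M1] IH1 H Hh //=.
    have /typ_App_inv [G1 [D [m [n1 [n2 [-> H1 H2 E]]]]]] := H.
    have [M' [n' [Hb H' lt]]] := IH1 _ _ _ H1 Hh.
    by exists (App M' M2), (n' + n2).+1; split; [apply: beta_appl | apply: tApp H' H2 E | lia].
  have [n' lt H'] := typ_redex_reduce H.
  by exists (subst M1 0 M2), n'; split=> //; apply: beta_redex.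
move=> /typ_Lam_inv [Gb [m [t' [n' [-> -> H E Em]]]]] Hh.
have [M' [n'' [Hb H' lt]]] := IH _ _ _ H Hh.
by exists (Lam M'), n''.+1; split; [apply: beta_lam | apply: tLam H' E Em | ].
Qed.

Lemma typable_solvable M : typable M -> solvable M.
Proof.
move=> [G [t [n H]]]; elim/ltn_ind: n M H => n IH M H.
have [Hh|Hh] := boolP (is_hnf M); first by exists M; split=> //; apply: rt_refl.
have [M' [n' [Hb H' lt]]] := typ_head_reduce H Hh.
have [M'' [red hnf]] := IH _ lt _ H'.
by exists M''; split=> //; apply: rt_trans (rt_step _ _ _ _ Hb) red.
Qed.

Lemma typs_Var0 m : typs (econs m env0) (Var 0) m (size m).
Proof.
elim: m => [|s m IH] /=; first by apply: tsNil; case.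
by rewrite -add1n; apply: tsCons (tVar (eeq_refl (esing 0 s)) (teq_refl s)) IH _; case.
Qed.

Lemma typs_Var0_inv m D n : typs D (Var 0) m n -> exists2 l, mteq l m & eeq D (econs l env0).
Proof.
elim: m D n => [|s m IH] D n.
  by move=> /typs_nil_inv [_ E]; exists [::] => //; apply: eeq_trans E _; case.
move=> /typs_cons_inv [G1 [D2 [_ [_ [_ /typ_Var_inv [_ [s' [E1 st]]] /IH [l lm E2] E]]]]].
exists (s' :: l).
  by have [l0 [P F]] := lm; exists (s' :: l0); split; [apply: perm_skip | constructor].
by apply: eeq_trans E _; apply: eeq_trans (eadd_eeq E1 E2) _; case.
Qed.

Definition eta_expand (M : term) : term := Lam (App (Defs.lift 0 M) (Var 0)).

Lemma typ_le_eta_expand M : typ_le M (eta_expand M).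
Proof.
move=> G t n H; have [m [r Et]] := arrow_surj t; subst t.
have HA := tApp (lift_typ 0 H) (typs_Var0 m) (eeq_refl _).
exists (n + size m).+2; apply: tLam HA _ _.
- by move=> i; rewrite /etail /eadd /eins /= cats0.
- by rewrite /eadd /eins.
Qed.

Lemma typ_le_eta_reduce M : typ_le (eta_expand M) M.
Proof.
move=> G t n /typ_Lam_inv [Gb [m [r [n' [-> _ /typ_App_inv H EG Em]]]]].
have [G1 [D [ms [n1 [n2 [_ H1 /typs_Var0_inv [l lms ED] E]]]]]] := H.
have ms_m : mteq ms m.
  apply: mteq_sym; apply: mteq_trans Em (mteq_trans _ lms); apply: perm_mteq.
  by apply: perm_trans (E 0) _; rewrite /eadd (typ_lift_unused H1); apply: ED.
exists n1; apply: typ_teq (teq_arrow ms_m (teq_refl r)) _.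
apply: typ_eeq (typ_lift_strengthen H1) _; apply: eeq_trans EG _.
apply: eeq_trans (etail_eeq E) _ => i.
rewrite /etail /eadd /erem; apply: perm_trans (Permutation_app_head _ (ED i.+1)) _.
by rewrite List.app_nil_r.
Qed.

Fixpoint ccomp (C D : context) : context :=
  match C with
  | Hole => D
  | CLam C' => CLam (ccomp C' D)
  | CAppL C' N => CAppL (ccomp C' D) N
  | CAppR N C' => CAppR N (ccomp C' D)
  end.

Lemma fill_ccomp C D M : fill (ccomp C D) M = fill C (fill D M).
Proof. by elim: C => //= [C ->|C -> N|N C ->]. Qed.

Definition obs_le (M N : term) : Prop :=
  forall C, solvable (fill C M) -> solvable (fill C N).

Lemma obs_le_trans M N P : obs_le M N -> obs_le N P -> obs_le M P.
Proof. by move=> MN NP C /MN /NP. Qed.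

Lemma obs_le_fill C M N : obs_le M N -> obs_le (fill C M) (fill C N).
Proof. by move=> MN D; rewrite -!fill_ccomp; apply: MN. Qed.

Lemma typ_le_obs_le M N : typ_le M N -> obs_le M N.
Proof.
move=> MN C /solvable_typable HC; apply: typable_solvable.
exact: typ_le_typable (typ_le_fill (C := C) MN) HC.
Qed.

Lemma unsolvable_obs_le M N : unsolvable M -> obs_le M N.
Proof.
move=> HM; apply: typ_le_obs_le => G t n H; exfalso.
by apply: HM; apply: typable_solvable; exists G, t, n.
Qed.

Definition Omega : term := App (Lam (App (Var 0) (Var 0))) (Lam (App (Var 0) (Var 0))).

Lemma beta_Omega M : beta Omega M -> M = Omega.
Proof.
move=> H; inversion H as [| ? ? ? H' | ? ? ? H' |]; subst => //;
  inversion H' as [| | | ? ? H'']; subst; inversion H'' as [| ? ? ? H3 | ? ? ? H3 |];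
  inversion H3.
Qed.

Lemma beta_red_Omega M : beta_red Omega M -> M = Omega.
Proof.
have red_Omega A B : beta_red A B -> A = Omega -> B = Omega.
  elim=> {A B} [A B Hb EA | // | A B C _ IH1 _ IH2 /IH1 /IH2 //].
  by rewrite EA in Hb; apply: beta_Omega.
by move=> /red_Omega; apply.
Qed.

Lemma Omega_unsolvable : unsolvable Omega.
Proof. by move=> [M [/beta_red_Omega ->]]. Qed.

(** * The contextual partial pseudo-metric *)

Import Order.TTheory GRing.Theory Num.Theory.
Local Open Scope classical_set_scope.
Local Open Scope ereal_scope.

Lemma le_esumD2 (R : realType) (T : choiceType) (a : T -> \bar R) (A B C D : set T) :
  (forall i, 0 <= a i) -> A `|` B `<=` C `|` D -> A `&` B `<=` C `&` D ->
  esum A a + esum B a <= esum C a + esum D a.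
Proof.
move=> a_ge0 sUAB sIAB; rewrite !(esum_mkcond _ a) -!esumD; try by move=> i _; case: ifP.
apply: le_esum => i _; move: (sUAB i) (sIAB i); rewrite /setU /setI /=.
have [Ai|Ai] := boolP (i \in A); have [Bi|Bi] := boolP (i \in B);
  have [Ci|Ci] := boolP (i \in C); have [Di|Di] := boolP (i \in D);
  move: Ai Bi Ci Di; rewrite ?in_setE ?notin_setE => Ai Bi Ci Di U I.
all: first [by rewrite ?adde0 ?add0e ?lexx ?adde_ge0 ?leeDl ?leeDr ?a_ge0 | exfalso; tauto].
Qed.

Section Weights.
Context {R : realType}.

Definition weight (n : nat) : \bar R := (((2 : R) ^+ n)^-1)%:E.

Lemma weight_gt0 n : 0 < weight n.
Proof. by rewrite lte_fin invr_gt0 exprn_gt0. Qed.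

Lemma weight_ge0 n : 0 <= weight n.
Proof. exact: ltW (weight_gt0 n). Qed.

Lemma weight_le m n : (m <= n)%N -> weight n <= weight m.
Proof. by move=> mn; rewrite lee_fin lef_pV2 ?posrE ?exprn_gt0 // ler_eXn2l // ltr1n. Qed.

Lemma esum_weight_le A B : A `<=` B -> esum A weight <= esum B weight.
Proof.
move=> AB; have := @le_esumD2 R _ weight A set0 B set0 weight_ge0.
by rewrite !esum_set0 !adde0 !setU0 !setI0; apply=> //; apply: sub0set.
Qed.

Lemma esum_weight_subU A B C : A `<=` B `|` C -> esum A weight <= esum B weight + esum C weight.
Proof.
move=> sABC; have := @le_esumD2 R _ weight A set0 B C weight_ge0.
by rewrite esum_set0 adde0 setU0 setI0; apply=> //; apply: sub0set.
Qed.

Lemma esum_weight_lt A B n : A `<=` B -> B n -> ~ A n -> esum A weight + weight n <= esum B weight.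
Proof.
move=> AB Bn An; rewrite -(esum_set1 (weight_ge0 n)) -[leRHS]adde0 -(esum_set0 weight).
apply: le_esumD2 => [i|i [Ai|/= ->]|i [Ai /= Ein]]; first exact: weight_ge0.
- by left; apply: AB.
- by left.
- by rewrite Ein in Ai.
Qed.

Lemma esum_weight_tail K : esum [set n | (K <= n)%N] weight <= ((2 : R) / 2 ^+ K)%:E.
Proof.
rewrite (@reindex_esum R nat nat setT _ (addn^~ K)); last first.
  split=> [k _ /=|a b _ _ /addIn //|n /= Kn]; first by rewrite leq_addl.
  by exists (n - K)%N => //; rewrite subnK.
rewrite -nneseries_esumT; last by move=> n; apply: weight_ge0.
rewrite (eq_eseriesr (g := fun i => ((2 / 2 ^+ K) / (2 ^ i.+1)%:R)%:E)).
  by apply: epsilon_trick0; apply: divr_ge0 => //; apply: exprn_ge0.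
move=> i _; rewrite /weight; congr EFin; rewrite natrX exprS exprD; field.
by rewrite !expf_neq0.
Qed.

Lemma esum_weight_fin A : esum A weight \is a fin_num.
Proof.
rewrite ge0_fin_numE; last by apply: esum_ge0 => n _; apply: weight_ge0.
have A_tail0 : A `<=` [set n | (0 <= n)%N] by [].
by apply: le_lt_trans (le_trans (esum_weight_le A_tail0) (esum_weight_tail 0)) _; rewrite ltry.
Qed.

Lemma exists_small_tail (eps : R) : (0 < eps)%R -> exists K, ((2 : R) / 2 ^+ K < eps)%R.
Proof.
move=> eps_gt0; set K := Num.Def.archi_bound (2 / eps).
have lt_K := @archi_boundP R (2 / eps) (divr_ge0 (ler0n _ 2) (ltW eps_gt0)).
have lt_2K : (K%:R < (2 : R) ^+ K)%R by rewrite -natrX ltr_nat ltn_expl.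
exists K; rewrite ltr_pdivrMr ?exprn_gt0 //.
by have := lt_trans lt_K lt_2K; rewrite ltr_pdivrMr // mulrC.
Qed.

End Weights.

Section FinitePPM.
Context {R : realType} {X : Type} {p : X -> X -> \bar R}.
Hypothesis p_fin : forall x y, p x y \is a fin_num.
Hypothesis p_tri : forall x y z, p x y <= p x z + p z y - p z z.

Lemma ppm_continuous_eps_delta (f : X -> X) :
  (forall x (eps : R), (0 < eps)%R -> exists2 delta : R, (0 < delta)%R &
     forall y, p y x < p x x + delta%:E -> p (f y) (f x) < p (f x) (f x) + eps%:E) ->
  ppm_continuous p f.
Proof.
pose q x y := fine (p x y); have pq x y : p x y = (q x y)%:E by rewrite fineK.
have q_tri x y z : (q x y <= q x z + q z y - q z z)%R.
  by rewrite -lee_fin EFinB EFinD -!pq.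
move=> cont U [F [F_gt0 ->]].
exists [set c : X * R | (0 < c.2)%R /\
  ppm_ball p c.1 c.2 `<=` f @^-1` (\bigcup_(c in F) ppm_ball p c.1 c.2)].
split; first by move=> c [].
apply/seteqP; split=> [x /= [c Fc] | x [c [c_gt0 sub] xc]]; last exact: sub.
rewrite /ppm_ball /= !pq -EFinD lte_fin => fx_c.
have [|delta delta_gt0 fdelta] := cont x (q c.1 c.1 + c.2 - q (f x) c.1)%R; first lra.
exists (x, delta) => /=; last by rewrite /ppm_ball /= pq -EFinD lte_fin; lra.
split=> // y /fdelta; rewrite !pq -!EFinD lte_fin => fy_fx; exists c => //.
by rewrite /ppm_ball /= !pq -EFinD lte_fin; have := q_tri (f y) c.1 (f x); lra.
Qed.

End FinitePPM.

Section ContextualPPM.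
Variables (R : realType) (e : nat -> context) (g : context -> nat).
Hypothesis gK : cancel g e.

Local Notation p := (p_ctx R e).

Definition ctx_unsolv (M N : term) : set nat :=
  [set n | unsolvable (fill (e n) M) \/ unsolvable (fill (e n) N)].

Lemma p_ctxE M N : p M N = esum (ctx_unsolv M N) weight.
Proof. by []. Qed.

Lemma p_ctx_fin M N : p M N \is a fin_num.
Proof. exact: esum_weight_fin. Qed.

Lemma p_ctxC M N : p M N = p N M.
Proof. by rewrite !p_ctxE; congr esum; apply/seteqP; split=> n; rewrite /ctx_unsolv /=; tauto. Qed.

Lemma p_ctx_PPM : is_PPM p.
Proof.
split=> [M N | M N | M N | M N P]; rewrite ?p_ctxE.
- by apply: esum_ge0 => n _; apply: weight_ge0.
- by apply: esum_weight_le => n [] H; left.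
- exact: p_ctxC.
- rewrite leeBrDr ?esum_weight_fin //; apply: le_esumD2 => [|n|n]; first exact: weight_ge0.
  all: rewrite /ctx_unsolv /setU /setI /=; tauto.
Qed.

Lemma p_ctx_gap M N m : solvable (fill (e m) M) -> unsolvable (fill (e m) N) ->
  p M M + weight m <= p M N.
Proof.
move=> SM UN; apply: esum_weight_lt; [by move=> n [] UM; left | by right |].
by rewrite /ctx_unsolv /unsolvable /=; tauto.
Qed.

Lemma p_ctx_le_obs M N : ppm_le p M N <-> obs_le M N.
Proof.
split=> [le_MN C CM | MN]; last first.
  by apply: esum_weight_le => n [UM|UN]; left=> // SM; apply: UN; apply: MN.
rewrite -(gK C) in CM *; apply: contrapT => /(p_ctx_gap CM) /le_trans /(_ le_MN).
by rewrite leNgt lteDl ?p_ctx_fin // weight_gt0.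
Qed.

Lemma p_ctx_eqv_obs M N : ppm_eqv p M N <-> obs_le M N /\ obs_le N M.
Proof. by rewrite /ppm_eqv; split=> -[/p_ctx_le_obs MN /p_ctx_le_obs NM]. Qed.

Lemma obs_eqv_ext_lambda_theory : ext_lambda_theory (ppm_eqv p).
Proof.
have eqv M N : typ_le M N -> typ_le N M -> ppm_eqv p M N.
  by move=> MN NM; apply/p_ctx_eqv_obs; split; apply: typ_le_obs_le.
split; first split.
- by move=> M; apply/p_ctx_eqv_obs; split=> C.
- by move=> M N /p_ctx_eqv_obs [MN NM]; apply/p_ctx_eqv_obs; split.
- move=> M N P /p_ctx_eqv_obs [MN NM] /p_ctx_eqv_obs [NP PN].
  by apply/p_ctx_eqv_obs; split; [apply: obs_le_trans MN NP | apply: obs_le_trans PN NM].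
- move=> M N P /p_ctx_eqv_obs [MN NM].
  have fillC C : ppm_eqv p (fill C M) (fill C N) by apply/p_ctx_eqv_obs; split; apply: obs_le_fill.
  by split; [|split]; [apply: (fillC (CAppL Hole P)) | apply: (fillC (CAppR P Hole)) |
    apply: (fillC (CLam Hole))].
- move=> M N; apply: eqv => G t n; last exact: typ_redex_expand.
  by move=> /typ_redex_reduce [n' _ H]; exists n'.
- by move=> M; apply: eqv; [apply: typ_le_eta_expand | apply: typ_le_eta_reduce].
Qed.

Lemma p_ctx_sensible : sensible_PPM p.
Proof.
split=> [M UM N | M SM /(_ Omega) /p_ctx_le_obs /(_ Hole SM)]; last exact: Omega_unsolvable.
by apply/p_ctx_le_obs; apply: unsolvable_obs_le.
Qed.

Lemma p_ctx_fill_continuity C M (eps : R) : (0 < eps)%R -> exists2 delta : R, (0 < delta)%R &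
  forall N, p N M < p M M + delta%:E -> p (fill C N) (fill C M) < p (fill C M) (fill C M) + eps%:E.
Proof.
move=> eps_gt0; have [K tail_lt] := exists_small_tail eps_gt0.
(* delta is the least weight of the contexts [e i] composed with [C], [i < K]. *)
pose mx := (\max_(i < K) g (ccomp (e i) C))%N.
exists ((2 : R) ^+ mx)^-1%R; first by rewrite invr_gt0 exprn_gt0.
move=> N; rewrite p_ctxC => NM.
have UNM (i : 'I_K) : unsolvable (fill (e i) (fill C N)) -> unsolvable (fill (e i) (fill C M)).
  rewrite -!fill_ccomp -(gK (ccomp (e i) C)) => UN SM.
  have weight_mx_le : weight mx <= weight (g (ccomp (e i) C)) :> \bar R.
    by apply: weight_le; apply: (@leq_bigmax _ (fun j : 'I_K => g (ccomp (e j) C))).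
  have := lt_le_trans (le_lt_trans (p_ctx_gap SM UN) NM) (leeD2l _ weight_mx_le).
  by rewrite ltxx.
have sub : ctx_unsolv (fill C N) (fill C M) `<=`
    ctx_unsolv (fill C M) (fill C M) `|` [set n | (K <= n)%N].
  move=> n UNn; case: (ltnP n K) => [nK|]; last by right.
  by left; case: UNn => [/(UNM (Ordinal nK))|]; left.
apply: le_lt_trans (esum_weight_subU sub) _; rewrite -p_ctxE.
apply: le_lt_trans (leeD2l _ (esum_weight_tail K)) _.
by rewrite lteD2lE ?p_ctx_fin // lte_fin.
Qed.

End ContextualPPM.

Theorem mainTheorem2 (R : realType) (e : nat -> context) :
  bijective e ->
  ext_lambda_PPM (p_ctx R e) /\ sensible_PPM (p_ctx R e).
Proof.
case=> g _ gK; have [_ _ _ p_tri] := p_ctx_PPM R e.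
split; last exact: p_ctx_sensible gK.
split; [exact: p_ctx_PPM | exact: obs_eqv_ext_lambda_theory gK |] => C.
exact: ppm_continuous_eps_delta (@p_ctx_fin R e) p_tri _ (p_ctx_fill_continuity gK C).
Qed.
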